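(* Let $U$ be a finite set of men and $W_1\subseteq W_2$ finite sets of women, with each man having a strict total order over $W_2$ and each woman a strict total order over $U$. Let $\Delta_1$ be the set of stable matchings of the instance $(U,W_1)$ and $\Delta_2$ the set of stable matchings of the instance $(U,W_2)$. Let $(M_1,M_2)\in\Delta_1\times\Delta_2$ and let $M_1'\in\Delta_1$ be such that $M_1'$ men-dominates $M_1$. Then there exists $M_2'\in\Delta_2$ such that $|M_1'\setminus M_2'|\le |M_1\setminus M_2|$.
   Context: A matching between a set of men $U$ and a set of women $W$ is a set of pairs $(u,w)\in U\times W$ such that every person belongs to at most one pair; if $(u,w)$ is in the matching, $w$ is the partner of $u$ and vice versa. Preferences are strict total orders; for an instance $(U,W')$ with $W'\subseteq W_2$, the preferences are the restrictions of the given ones. A blocking pair of a matching $M$ is a pair $(u,w)\notin M$ such that ($u$ is unmatched in $M$ or $u$ prefers $w$ to his partner in $M$) and ($w$ is unmatched in $M$ or $w$ prefers $u$ to her partner in $M$). A matching is stable if it has no blocking pair. Given two stable matchings $M,M'$ of the same instance, $M$ men-dominates $M'$ if every man's partner in $M$ is at least as good for him as his partner in $M'$ (in particular he is matched in $M$ whenever matched in $M'$). Matchings are viewed as sets of pairs, so $|M_1\setminus M_2|$ is the number of pairs of $M_1$ not in $M_2$. *)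

From mathcomp Require Import all_boot.
Set Implicit Arguments. Unset Strict Implicit. Unset Printing Implicit Defensive.

Definition strict_total_order (T : eqType) (r : rel T) : Prop :=
  [/\ forall x, ~~ r x x,
      forall x y z, r x y -> r y z -> r x z &
      forall x y, x != y -> r x y || r y x].

Section Matchings.
Variables (U W : finType).
(* pm u w w' : man u strictly prefers w to w';  pw w u u' : woman w strictly
   prefers u to u'. *)
Variables (pm : U -> rel W) (pw : W -> rel U).

Definition is_matching (Ws : {set W}) (M : {set U * W}) : Prop :=
  [/\ forall p, p \in M -> p.2 \in Ws,
      forall u w w', (u, w) \in M -> (u, w') \in M -> w = w' &
      forall u u' w, (u, w) \in M -> (u', w) \in M -> u = u'].

Definition man_unmatched (M : {set U * W}) (u : U) : Prop :=
  forall w, (u, w) \notin M.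
Definition woman_unmatched (M : {set U * W}) (w : W) : Prop :=
  forall u, (u, w) \notin M.

Definition blocking_pair (Ws : {set W}) (M : {set U * W}) (u : U) (w : W) : Prop :=
  [/\ w \in Ws, (u, w) \notin M,
      man_unmatched M u \/ (exists w', (u, w') \in M /\ pm u w w') &
      woman_unmatched M w \/ (exists u', (u', w) \in M /\ pw w u u')].

Definition stable (Ws : {set W}) (M : {set U * W}) : Prop :=
  is_matching Ws M /\ forall u w, ~ blocking_pair Ws M u w.

Definition men_dominates (M M' : {set U * W}) : Prop :=
  forall u w', (u, w') \in M' ->
    exists w, (u, w) \in M /\ (w = w' \/ pm u w w').

End Matchings.

From mathcomp Require Import all_boot.
Set Implicit Arguments. Unset Strict Implicit. Unset Printing Implicit Defensive.

(* Let A be stable for (U, W1) and B stable for (U, W2).  Giving every man the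
   better of his partners in A and B yields a stable matching of (U, W2): the
   only delicate case of a blocking pair (u, w) is when w's partner v in B
   prefers his A-partner to w.  The men S who strictly prefer their A-partner
   to their B-partner pass, via "A-partner, then her B-partner", injectively
   into S, so their A-partners and their B-partners form the same set of
   women; hence w also has an A-partner in S, and (u, w) blocks A.
   For A = M1' and B = M2, men-dominance turns each pair (u, w) of M1 :&: M2
   into a pair (u, w') of M1' that survives in the new matching, while
   #|M1'| <= #|M1| because, M1 being stable, every woman matched in M1' is
   matched in M1. *)

Section StrictTotalOrder.
Variables (T : eqType) (r : rel T).
Hypothesis r_sto : strict_total_order r.

Lemma sto_irr x : r x x = false.
Proof. by case: r_sto => irr _ _; apply/negbTE. Qed.

Lemma sto_trans x y z : r x y -> r y z -> r x z.
Proof. by case: r_sto => _ tr _; apply: tr. Qed.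

Lemma sto_asym x y : r x y -> r y x = false.
Proof. by move=> rxy; apply/negP => /(sto_trans rxy); rewrite sto_irr. Qed.

Lemma sto_total x y : x != y -> r x y || r y x.
Proof. by case: r_sto => _ _; apply. Qed.

Lemma sto_connex x y : x != y -> ~~ r y x -> r x y.
Proof. by move=> /sto_total /orP [] ->. Qed.

End StrictTotalOrder.

Section MenJoin.
Variables (U W : finType) (pm : U -> rel W) (pw : W -> rel U).
Hypothesis pm_sto : forall u, strict_total_order (pm u).
Hypothesis pw_sto : forall w, strict_total_order (pw w).

Implicit Types (Ws : {set W}) (A B M : {set U * W}) (X : {set U}).

Lemma matching_fst_inj Ws M : is_matching Ws M -> {in M &, injective fst}.
Proof.
case=> _ Mfun _ [u w] [u' w'] /= Muw Mu'w' eu; subst u'.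
by rewrite (Mfun _ _ _ Muw Mu'w').
Qed.

Lemma matching_snd_inj Ws M : is_matching Ws M -> {in M &, injective snd}.
Proof.
case=> _ _ Minj [u w] [u' w'] /= Muw Mu'w' ew; subst w'.
by rewrite (Minj _ _ _ Muw Mu'w').
Qed.

Definition partners M X : {set W} := [set p.2 | p in M & p.1 \in X].

Lemma partnersP M X w :
  reflect (exists2 u, u \in X & (u, w) \in M) (w \in partners M X).
Proof.
apply: (iffP imsetP) => [[[u w']]|[u Xu Muw]].
  by rewrite inE => /andP[Muw' Xu] /= ->; exists u.
by exists (u, w); rewrite // inE Muw.
Qed.

Lemma card_partners Ws M X : is_matching Ws M ->
  #|partners M X| = #|[set p.1 | p in M & p.1 \in X]|.
Proof.
move=> mM; have [inj1 inj2] := (matching_fst_inj mM, matching_snd_inj mM).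
have sub : {subset [set p in M | p.1 \in X] <= M}.
  by move=> p; rewrite inE => /andP[].
rewrite card_in_imset => [|p q /sub Mp /sub Mq]; last exact: inj2.
by rewrite card_in_imset => // p q /sub Mp /sub Mq; exact: inj1.
Qed.

Lemma card_partners_le Ws M X : is_matching Ws M -> #|partners M X| <= #|X|.
Proof.
move=> mM; rewrite (card_partners _ mM).
by apply/subset_leq_card/subsetP => u /imsetP[p]; rewrite inE => /andP[_ Xp] ->.
Qed.

Lemma card_partners_ge Ws M X : is_matching Ws M ->
  {in X, forall u, exists w, (u, w) \in M} -> #|X| <= #|partners M X|.
Proof.
move=> mM matched; rewrite (card_partners _ mM).
apply/subset_leq_card/subsetP => u Xu; have [w Muw] := matched u Xu.
by apply/imsetP; exists (u, w); rewrite // inE Muw.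
Qed.

Lemma strict_pref_notin M u w :
  (forall x, (u, x) \in M -> pm u w x) -> (u, w) \notin M.
Proof. by move=> pref; apply/negP => /pref; rewrite sto_irr. Qed.

Lemma strict_pref_weak M u w :
  (forall x, (u, x) \in M -> pm u w x) -> forall x, (u, x) \in M -> ~~ pm u x w.
Proof. by move=> pref x /pref wx; rewrite (sto_asym (pm_sto u) wx). Qed.

Lemma blocking_pairP Ws M u w : is_matching Ws M ->
  blocking_pair pm pw Ws M u w <->
  [/\ w \in Ws, forall x, (u, x) \in M -> pm u w x
              & forall v, (v, w) \in M -> pw w u v].
Proof.
case=> _ Mfun Minj; split.
  case=> Ww _ man wom; split=> // [x Mux|v Mvw].
    by case: man => [/(_ x)/negP//|[x' [Mux' wx']]]; rewrite (Mfun _ _ _ Mux Mux').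
  by case: wom => [/(_ v)/negP//|[v' [Mv'w uv']]]; rewrite (Minj _ _ _ Mvw Mv'w).
case=> Ww man wom; split=> //; first exact: strict_pref_notin.
  have [/existsP[x Mux]|noMu] := boolP [exists x, (u, x) \in M].
    by right; exists x; split=> //; apply: man.
  by left=> x; apply: contra noMu => Mux; apply/existsP; exists x.
have [/existsP[v Mvw]|noMw] := boolP [exists v, (v, w) \in M].
  by right; exists v; split=> //; apply: wom.
by left=> v; apply: contra noMw => Mvw; apply/existsP; exists v.
Qed.

Lemma stable_no_blocking Ws M u w : stable pm pw Ws M -> w \in Ws ->
  (forall x, (u, x) \in M -> pm u w x) ->
  (forall v, (v, w) \in M -> pw w u v) -> False.
Proof.
by case=> mM noblock Ww man wom; apply: (noblock u w); apply/(blocking_pairP _ _ mM).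
Qed.

Lemma stable_partner_preferred Ws M u u' w : stable pm pw Ws M ->
  (u', w) \in M -> u != u' -> (forall x, (u, x) \in M -> ~~ pm u x w) ->
  pw w u' u.
Proof.
move=> sM Mu'w neq weak; have [[Mfem _ Minj] _] := sM.
apply: (sto_connex (pw_sto w)); first by rewrite eq_sym.
apply/negP => wuu'.
have Muw : (u, w) \notin M.
  by apply: contra neq => Muw; rewrite (Minj _ _ _ Muw Mu'w).
apply: (stable_no_blocking sM (Mfem _ Mu'w)) => [x Mux|v Mvw].
  by apply: (sto_connex (pm_sto u)) (weak _ Mux); apply: contraNneq Muw => ->.
by rewrite (Minj _ _ _ Mvw Mu'w).
Qed.

Lemma men_dominates_pref M M' u w : men_dominates pm M' M ->
  (forall x, (u, x) \in M' -> pm u w x) -> forall x, (u, x) \in M -> pm u w x.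
Proof.
move=> dom pref x /dom[y [M'uy [<-|yx]]]; first exact: pref.
exact: sto_trans (pref _ M'uy) yx.
Qed.

Definition weakly_prefers M u w := [forall x, ((u, x) \in M) ==> ~~ pm u x w].
Definition strictly_prefers M u w := [forall x, ((u, x) \in M) ==> pm u w x].

Lemma weakly_prefersP M u w :
  reflect (forall x, (u, x) \in M -> ~~ pm u x w) (weakly_prefers M u w).
Proof. exact: forall_inP. Qed.

Lemma strictly_prefersP M u w :
  reflect (forall x, (u, x) \in M -> pm u w x) (strictly_prefers M u w).
Proof. exact: forall_inP. Qed.

Definition men_join A B : {set U * W} :=
  [set p | (p \in A) && weakly_prefers B p.1 p.2
        || (p \in B) && weakly_prefers A p.1 p.2].

Lemma mem_men_join A B u w : ((u, w) \in men_join A B) =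
  ((u, w) \in A) && weakly_prefers B u w || ((u, w) \in B) && weakly_prefers A u w.
Proof. by rewrite inE. Qed.

Lemma men_joinC A B : men_join A B = men_join B A.
Proof. by apply/setP => p; rewrite !inE orbC. Qed.

Definition men_preferring A B : {set U} :=
  [set u | [exists w, ((u, w) \in A) && strictly_prefers B u w]].

Lemma men_preferringP A B u : reflect
  (exists2 w, (u, w) \in A & forall x, (u, x) \in B -> pm u w x)
  (u \in men_preferring A B).
Proof.
rewrite inE; apply: (iffP existsP) => [[w /andP[Auw /strictly_prefersP]]|[w Auw]].
  by exists w.
by move=> /strictly_prefersP pref; exists w; rewrite Auw.
Qed.

Lemma men_join_dominates Ws A B : is_matching Ws A ->
  men_dominates pm (men_join A B) A.
Proof.
case=> _ Afun _ u x Aux.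
have [/existsP[w /andP[Buw wx]]|noB] := boolP [exists w, ((u, w) \in B) && pm u w x].
  exists w; split; last by right.
  rewrite mem_men_join Buw; apply/orP; right; apply/weakly_prefersP => y Auy.
  by rewrite (Afun _ _ _ Auy Aux) (sto_asym (pm_sto u) wx).
exists x; split; last by left.
rewrite mem_men_join Aux /=; apply/orP; left; apply/weakly_prefersP => y Buy.
by apply: contra noB => yx; apply/existsP; exists y; rewrite Buy.
Qed.

Lemma men_join_matching Ws1 Ws2 A B : stable pm pw Ws1 A -> stable pm pw Ws2 B ->
  is_matching (Ws1 :|: Ws2) (men_join A B).
Proof.
move=> sA sB; have [[Afem Afun Ainj] _] := sA; have [[Bfem Bfun Binj] _] := sB.
have man_mixed u w w' : (u, w) \in A -> weakly_prefers B u w ->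
    (u, w') \in B -> weakly_prefers A u w' -> w = w'.
  move=> Auw /weakly_prefersP wB Buw' /weakly_prefersP wA.
  case: (eqVneq w w') => // neq.
  case/orP: (sto_total (pm_sto u) neq) => [ww'|w'w].
    by case/negP: (wA _ Auw).
  by case/negP: (wB _ Buw').
have woman_mixed u u' w : (u, w) \in A -> weakly_prefers B u w ->
    (u', w) \in B -> weakly_prefers A u' w -> u = u'.
  move=> Auw /weakly_prefersP wB Bu'w /weakly_prefersP wA.
  case: (eqVneq u u') => // neq.
  have neq' : u' != u by rewrite eq_sym.
  have := stable_partner_preferred sB Bu'w neq wB.
  by rewrite (sto_asym (pw_sto w) (stable_partner_preferred sA Auw neq' wA)).
split.
- move=> [u w]; rewrite mem_men_join inE.
  case/orP=> /andP[Juw _]; first by rewrite (Afem _ Juw).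
  by rewrite (Bfem _ Juw) orbT.
- move=> u w w'; rewrite !mem_men_join.
  case/orP=> /andP[h1 p1]; case/orP=> /andP[h2 p2].
  + exact: Afun h1 h2.
  + exact: man_mixed h1 p1 h2 p2.
  + exact: esym (man_mixed _ _ _ h2 p2 h1 p1).
  + exact: Bfun h1 h2.
- move=> u u' w; rewrite !mem_men_join.
  case/orP=> /andP[h1 p1]; case/orP=> /andP[h2 p2].
  + exact: Ainj h1 h2.
  + exact: woman_mixed h1 p1 h2 p2.
  + exact: esym (woman_mixed _ _ _ h2 p2 h1 p1).
  + exact: Binj h1 h2.
Qed.

Lemma partners_men_preferring_sub Ws1 Ws2 A B : Ws1 \subset Ws2 ->
  stable pm pw Ws1 A -> stable pm pw Ws2 B ->
  partners A (men_preferring A B) \subset partners B (men_preferring A B).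
Proof.
move=> sub sA sB; have [[Afem Afun _] _] := sA; have [[_ Bfun _] _] := sB.
apply/subsetP => w /partnersP[u /men_preferringP[w' Auw' uB] Auw].
rewrite (Afun _ _ _ Auw' Auw) in uB.
have [/existsP[v Bvw]|noB] := boolP [exists v, (v, w) \in B]; last first.
  exfalso; apply: (stable_no_blocking sB (subsetP sub _ (Afem _ Auw)) uB) => v Bvw.
  by case/negP: noB; apply/existsP; exists v.
apply/partnersP; exists v => //; apply/men_preferringP.
have neq : u != v.
  by apply: contraTneq Bvw => <-; exact: strict_pref_notin uB.
have wvu := stable_partner_preferred sB Bvw neq (strict_pref_weak uB).
have [/existsP[x /andP[Avx xw]]|noA] := boolP [exists x, ((v, x) \in A) && pm v x w].
  by exists x => // y Bvy; rewrite (Bfun _ _ _ Bvy Bvw).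
exfalso; have neq' : v != u by rewrite eq_sym.
have wA : forall x, (v, x) \in A -> ~~ pm v x w.
  by move=> x Avx; apply: contra noA => xw; apply/existsP; exists x; rewrite Avx.
have := stable_partner_preferred sA Auw neq' wA.
by rewrite (sto_asym (pw_sto w) wvu).
Qed.

Lemma partners_men_preferring Ws1 Ws2 A B : Ws1 \subset Ws2 ->
  stable pm pw Ws1 A -> stable pm pw Ws2 B ->
  partners B (men_preferring A B) = partners A (men_preferring A B).
Proof.
move=> sub sA sB; apply/esym/eqP.
rewrite eqEcard (partners_men_preferring_sub sub sA sB) /=.
apply: leq_trans (card_partners_le _ sB.1) (card_partners_ge sA.1 _).
by move=> u /men_preferringP[w Auw _]; exists w.
Qed.

Lemma men_join_stable Ws1 Ws2 A B : Ws1 \subset Ws2 ->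
  stable pm pw Ws1 A -> stable pm pw Ws2 B -> stable pm pw Ws2 (men_join A B).
Proof.
move=> sub sA sB; have [[_ Afun _] _] := sA; have [[_ Bfun _] _] := sB.
have mJ : is_matching Ws2 (men_join A B).
  by rewrite -(setUidPr sub); exact: men_join_matching.
split=> // u w /(blocking_pairP _ _ mJ) [Ww uJ wJ].
have uA := men_dominates_pref (men_join_dominates B sA.1) uJ.
have uB : forall x, (u, x) \in B -> pm u w x.
  by apply: men_dominates_pref uJ; rewrite men_joinC; exact: men_join_dominates sB.1.
have [/existsP[v /andP[Bvw wuv]]|wB] :=
  boolP [exists v, ((v, w) \in B) && ~~ pw w u v]; last first.
  apply: (stable_no_blocking sB Ww uB) => v Bvw.
  by apply: contraNT wB => wuv; apply/existsP; exists v; rewrite Bvw.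
have [vS|vS] := boolP (v \in men_preferring A B).
  have : w \in partners A (men_preferring A B).
    by rewrite -(partners_men_preferring sub sA sB); apply/partnersP; exists v.
  case/partnersP=> u' /men_preferringP[x Au'x u'B] Au'w.
  rewrite (Afun _ _ _ Au'x Au'w) in u'B.
  have J'w : (u', w) \in men_join A B.
    by rewrite mem_men_join Au'w /=; apply/orP; left; apply/weakly_prefersP;
      exact: strict_pref_weak.
  have neq : u != u' by apply: contraTneq Au'w => <-; exact: strict_pref_notin uA.
  have := stable_partner_preferred sA Au'w neq (strict_pref_weak uA).
  by rewrite (sto_asym (pw_sto w) (wJ _ J'w)).
case/negP: wuv; apply: wJ; rewrite mem_men_join Bvw; apply/orP; right.
apply/weakly_prefersP => x Avx; apply: contra vS => xw.
by apply/men_preferringP; exists x => // y Bvy; rewrite (Bfun _ _ _ Bvy Bvw).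
Qed.

Lemma men_dominates_card_le Ws M M' : stable pm pw Ws M -> is_matching Ws M' ->
  men_dominates pm M' M -> #|M'| <= #|M|.
Proof.
move=> sM mM' dom; have [M'fem M'fun _] := mM'.
rewrite -(card_in_imset (matching_snd_inj mM')).
rewrite -(card_in_imset (matching_snd_inj sM.1)).
apply/subset_leq_card/subsetP => _ /imsetP[[u w] M'uw ->] /=.
have [/existsP[v Mvw]|noM] := boolP [exists v, (v, w) \in M].
  by apply/imsetP; exists (v, w).
exfalso; apply: (stable_no_blocking (u := u) sM (M'fem _ M'uw)) => [x Mux|v Mvw].
  have [y [M'uy]] := dom _ _ Mux; rewrite (M'fun _ _ _ M'uy M'uw) => -[ewx|//].
  by case/negP: noM; apply/existsP; exists u; rewrite ewx.
by case/negP: noM; apply/existsP; exists v.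
Qed.

Lemma card_meet_le_men_join Ws1 Ws2 Ws A B M : is_matching Ws1 A ->
  is_matching Ws2 B -> is_matching Ws M -> men_dominates pm A M ->
  #|M :&: B| <= #|A :&: men_join A B|.
Proof.
move=> mA mB mM dom; have [_ Bfun _] := mB.
have subM : {subset M :&: B <= M} by move=> p /setIP[].
have subA : {subset A :&: men_join A B <= A} by move=> p /setIP[].
rewrite -(card_in_imset (sub_in2 subM (matching_fst_inj mM))).
rewrite -(card_in_imset (sub_in2 subA (matching_fst_inj mA))).
apply/subset_leq_card/subsetP => _ /imsetP[[u w] /setIP[Muw Buw] ->] /=.
have [w' [Auw' w'w]] := dom _ _ Muw.
apply/imsetP; exists (u, w') => //; rewrite in_setI mem_men_join Auw' /=.
apply/orP; left; apply/weakly_prefersP => x Bux; rewrite (Bfun _ _ _ Bux Buw).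
by case: w'w => [->|w'w]; rewrite ?sto_irr ?(sto_asym (pm_sto u) w'w).
Qed.

End MenJoin.

Theorem mainTheorem1 (U W : finType) (pm : U -> rel W) (pw : W -> rel U)
  (W1 W2 : {set W}) (M1 M2 M1' : {set U * W}) :
  (forall u, strict_total_order (pm u)) ->
  (forall w, strict_total_order (pw w)) ->
  W1 \subset W2 ->
  stable pm pw W1 M1 -> stable pm pw W2 M2 -> stable pm pw W1 M1' ->
  men_dominates pm M1' M1 ->
  exists M2' : {set U * W},
    stable pm pw W2 M2' /\ #|M1' :\: M2'| <= #|M1 :\: M2|.
Proof.
move=> pm_sto pw_sto sub s1 s2 s1' dom.
exists (men_join pm M1' M2); split.
  exact: (men_join_stable pm_sto pw_sto sub s1' s2).
rewrite !cardsD leq_sub //.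
  exact: (men_dominates_card_le pm_sto s1 s1'.1 dom).
exact: (card_meet_le_men_join pm_sto s1'.1 s2.1 s1.1 dom).
Qed.
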